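(* Let $r\in\{2,3\}$. There exists $\eta_0>0$ such that for every $0<\eta<\eta_0$ there is $n_0=n_0(\eta,r)$ such that every $r$-uniform hypergraph $H$ on $n>n_0$ vertices with $|E(H)|\geq \eta\binom{n}{r}$ contains a copy of $K^{(r)}(t)$, where $t=\eta(\log n)^{1/(r-1)}$.
   Context: An $r$-uniform hypergraph has edges that are $r$-element subsets of its vertex set. $K^{(r)}(t)$ denotes the complete balanced $r$-partite $r$-uniform hypergraph: vertex set partitioned into $r$ classes each of size $t$, and edges all $r$-sets with exactly one vertex in each class. $\log$ is base $2$. *)

From Stdlib Require Import Reals.
From mathcomp Require Import all_boot.
Set Implicit Arguments.
Unset Strict Implicit.
Unset Printing Implicit Defensive.

Definition uniform (n r : nat) (E : {set {set 'I_n}}) : Prop :=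
  forall e, e \in E -> #|e| = r.

Definition contains_Krt (n r t : nat) (E : {set {set 'I_n}}) : Prop :=
  exists V : 'I_r -> {set 'I_n},
    (forall i, #|V i| = t) /\
    (forall i j, i != j -> [disjoint V i & V j]) /\
    (forall g : 'I_r -> 'I_n, (forall i, g i \in V i) ->
        [set g i | i in 'I_r] \in E).

Definition log2 (x : R) : R := Rdiv (ln x) (ln 2).

(* Kővári–Sós–Turán double counting.  If sets [N i] in a ground set of size [n]
   have average size [n / c], then many of them have size about [n / (2 c)], and
   counting pairs [(S, i)] with [S] a [t]-subset of [N i] gives one [t]-set [S]
   contained in [m] of the [N i], for [m] about [#|I| / (4 c) ^ (t + 1)].  Applied to
   the neighbourhoods of a graph with [C(n, 2) <= p |E|] this yields [K(t, t)] when
   [(t + 1) (16 p) ^ (t + 1) <= n].  For a 3-graph it is first applied to the links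
   [N (x, y) = {z | xyz in E}]: a [t]-set [Z] lies in the links of a set [A] of about
   [n ^ 2 / (48 p) ^ (t + 1)] pairs, and the graph case applied to [A] gives [X] and
   [Y] with [X * Y] inside [A], so that [X, Y, Z] span [K^(3)(t)].  Taking [p] about
   [1 / eta], these size conditions hold for [t <= eta log n], resp.
   [t <= eta sqrt (log n)], once [n] is large, because [eta log (48 p)] is small. *)

From Stdlib Require Import Reals ZArith Lra Lia.
From mathcomp Require Import all_boot ssralg zify ring.

Set Implicit Arguments.
Unset Strict Implicit.
Unset Printing Implicit Defensive.

Lemma leq_exp2rW m n e : m <= n -> m ^ e <= n ^ e.
Proof. by case: e => // e; rewrite leq_exp2r. Qed.

Lemma expn_sub_le_ffact n m : (n - m) ^ m <= n ^_ m.
Proof.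
have -> : (n - m) ^ m = \prod_(i < m) (n - m) by rewrite prod_nat_const card_ord.
by rewrite ffact_prod; apply: leq_prod => i _; apply: leq_sub2l; apply: ltnW.
Qed.

Lemma ffact_le_expn n m : n ^_ m <= n ^ m.
Proof.
have -> : n ^ m = \prod_(i < m) n by rewrite prod_nat_const card_ord.
by rewrite ffact_prod; apply: leq_prod => i _; apply: leq_subr.
Qed.

Lemma bin_mul_expn_sub_le n d t : 'C(n, t) * (d - t) ^ t <= 'C(d, t) * n ^ t.
Proof.
rewrite -(@leq_pmul2r t`!) ?fact_gt0 //.
rewrite mulnAC bin_ffact [X in _ <= X]mulnAC bin_ffact mulnC.
by apply: leq_mul; [exact: expn_sub_le_ffact | exact: ffact_le_expn].
Qed.

(** * Common subsets of a dense family of sets *)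

Lemma card_sum_mem (T : finType) (A : {pred T}) : #|A| = \sum_x (x \in A).
Proof. by rewrite -sum1_card big_mkcond; apply: eq_bigr => x _; case: (x \in A). Qed.

Lemma exists_subset_card (T : finType) (A : {set T}) m : m <= #|A| ->
  exists2 B : {set T}, B \subset A & #|B| = m.
Proof.
move=> le_mA.
have : 0 < #|[set B : {set T} | B \subset A & #|B| == m]| by rewrite cards_draws bin_gt0.
by case/card_gt0P => B; rewrite inE => /andP [sBA /eqP cardB]; exists B.
Qed.

Section CommonSubset.
Variables (I T : finType) (N : I -> {set T}).

Lemma sum_card_pairs : \sum_i #|N i| = #|[set q : I * T | q.2 \in N q.1]|.
Proof.
under eq_bigr => i _ do rewrite card_sum_mem.
by rewrite pair_bigA card_sum_mem; apply: eq_bigr => q _; rewrite inE.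
Qed.

Lemma sum_card_subsets_covered t :
  \sum_(S : {set T} | #|S| == t) #|[set i | S \subset N i]| = \sum_i 'C(#|N i|, t).
Proof.
transitivity (\sum_(S : {set T} | #|S| == t) \sum_i (S \subset N i : nat)).
  by apply: eq_bigr => S _; rewrite card_sum_mem; apply: eq_bigr => i _; rewrite inE.
rewrite exchange_big /=; apply: eq_bigr => i _.
rewrite -cards_draws card_sum_mem big_mkcond /=.
by apply: eq_bigr => S _; rewrite !inE; case: (_ \subset _); case: (_ == _).
Qed.

Lemma exists_subset_covered t m :
  m.-1 * 'C(#|T|, t) < \sum_i 'C(#|N i|, t) ->
  exists2 S : {set T}, #|S| = t &
    exists2 A : {set I}, #|A| = m & {in A, forall i, S \subset N i}.
Proof.
case: (pickP [pred S : {set T} | (#|S| == t) && (m <= #|[set i | S \subset N i]|)])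
  => [S /andP [/eqP cardS le_m] | none].
  have [A sA cardA] := exists_subset_card le_m.
  by exists S => //; exists A => // i /(subsetP sA); rewrite inE.
move=> lt_sum; exfalso; move: lt_sum; apply/negP; rewrite -leqNgt.
rewrite -sum_card_subsets_covered -card_draws mulnC -sum_nat_cond_const.
apply: leq_sum => S cardS; have := none S; rewrite /= cardS /= => /negbT; lia.
Qed.

Lemma sum_card_le_large D :
  \sum_i #|N i| <= #|[set i | D <= #|N i|]| * #|T| + #|I| * D.
Proof.
rewrite (bigID (fun i => D <= #|N i|)) /= -sum_nat_cond_const.
apply: leq_add; first by apply: leq_sum => i _; exact: max_card.
apply: leq_trans (_ : \sum_(i | ~~ (D <= #|N i|)) D <= _).
  by apply: leq_sum => i; rewrite -ltnNge => /ltnW.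
by rewrite sum_nat_cond_const leq_mul2r max_card orbT.
Qed.

Lemma exists_subset_covered_large t m D :
  m.-1 * #|T| ^ t < #|[set i | D <= #|N i|]| * (D - t) ^ t ->
  exists2 S : {set T}, #|S| = t &
    exists2 A : {set I}, #|A| = m & {in A, forall i, S \subset N i}.
Proof.
set g := #|_| => lt_g; apply: exists_subset_covered.
have Dt_gt0 : 0 < (D - t) ^ t by move: lt_g; case: ((D - t) ^ t) => //; rewrite muln0.
have t_le_D : t <= D.
  by move: Dt_gt0; rewrite expn_gt0 subn_gt0 => /orP [/ltnW // | /eqP ->].
have g_le : g * 'C(D, t) <= \sum_i 'C(#|N i|, t).
  rewrite -sum_nat_cond_const big_mkcond /=.
  by apply: leq_sum => i _; case: ifP => // le_D; exact: leq_bin2l.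
rewrite -(ltn_pmul2r Dt_gt0); apply: leq_trans (leq_mul g_le (leqnn _)).
rewrite -mulnA; apply: leq_ltn_trans (_ : m.-1 * ('C(D, t) * #|T| ^ t) < _).
  by rewrite leq_mul2l bin_mul_expn_sub_le orbT.
by rewrite mulnCA (mulnC g) -mulnA ltn_pmul2l ?bin_gt0.
Qed.

Lemma exists_subset_covered_dense c t m : 0 < c ->
  #|I| * #|T| <= c * \sum_i #|N i| ->
  t.+1 * (4 * c) <= #|T| ->
  m.-1 * (2 * c * (4 * c) ^ t) < #|I| ->
  exists2 S : {set T}, #|S| = t &
    exists2 A : {set I}, #|A| = m & {in A, forall i, S \subset N i}.
Proof.
move=> c_gt0 dense large small.
set n := #|T| in dense large *.
set D := n %/ (2 * c).
have D_le : D * (2 * c) <= n := leq_divM _ _.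
have D_gt : n < D.+1 * (2 * c) by apply: ltn_ceil; lia.
apply: (@exists_subset_covered_large _ _ D).
set g := #|_|.
have I_le : #|I| <= 2 * c * g.
  have := sum_card_le_large D; rewrite -/g -/n => markov.
  nia.
have n_le : n <= (D - t) * (4 * c) by nia.
have nt_le : n ^ t <= (D - t) ^ t * (4 * c) ^ t by rewrite -expnMn; apply: leq_exp2rW.
have n_gt0 : 0 < n by lia.
have M_gt0 : 0 < 2 * c * (4 * c) ^ t by rewrite !muln_gt0 expn_gt0 !muln_gt0 c_gt0.
rewrite -(ltn_pmul2r M_gt0) -/n mulnAC.
apply: leq_trans (_ : #|I| * n ^ t <= _); first by rewrite ltn_pmul2r ?expn_gt0 ?n_gt0.
by apply: leq_trans (leq_mul I_le nt_le) _; apply: eq_leq; ring.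
Qed.
End CommonSubset.

(** * Complete bipartite graphs and complete r-partite hypergraphs *)

Lemma exists_Ktt_dense (T : finType) (R : rel T) c t :
  irreflexive R -> 0 < c ->
  #|T| * #|T| <= c * \sum_x #|[set y | R x y]| ->
  t.+1 * (4 * c) ^ t.+1 <= #|T| ->
  exists X Y : {set T}, [/\ #|X| = t, #|Y| = t, [disjoint X & Y] &
    forall x y, x \in X -> y \in Y -> R x y].
Proof.
move=> irrR c_gt0 dense large.
have Q_gt0 : 0 < (4 * c) ^ t by rewrite expn_gt0 muln_gt0 c_gt0.
have [] := @exists_subset_covered_dense T T (fun x => [set y | R x y]) c t t c_gt0 dense.
- by apply: leq_trans large; rewrite leq_mul2l expnS leq_pmulr ?orbT.
- by apply: leq_trans large; rewrite expnS !mulnA ltn_pmul2r //; nia.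
move=> Y cardY [X cardX XY]; exists X, Y; split => //.
- apply/pred0P => z /=; apply/negP => /andP [zX zY].
  by have := subsetP (XY z zX) z zY; rewrite inE irrR.
- by move=> x y xX yY; have := subsetP (XY x xX) y yY; rewrite inE.
Qed.

Lemma card_le_sum_link2 (T : finType) (E : {set {set T}}) :
  {in E, forall e : {set T}, #|e| = 2} ->
  #|E| <= \sum_x #|[set y | [set x; y] \in E]|.
Proof.
move=> uE; rewrite sum_card_pairs.
apply: leq_trans (leq_imset_card (fun q : T * T => [set q.1; q.2]) _).
apply: subset_leq_card; apply/subsetP => e eE.
have /cards2P [x [y [_ exy]]] : #|e| == 2 by rewrite uE.
by rewrite {}exy in eE *; apply/imsetP; exists (x, y); rewrite ?inE.
Qed.

Lemma card_le_sum_link3 (T : finType) (E : {set {set T}}) :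
  {in E, forall e : {set T}, #|e| = 3} ->
  #|E| <= \sum_(q : T * T) #|[set z | [set q.1; q.2; z] \in E]|.
Proof.
move=> uE; rewrite sum_card_pairs.
apply: leq_trans (leq_imset_card (fun q : T * T * T => [set q.1.1; q.1.2; q.2]) _).
apply: subset_leq_card; apply/subsetP => e eE.
have /card_gt0P [x xe] : 0 < #|e| by rewrite uE.
have /cards2P [y [z [_ exyz]]] : #|e :\ x| == 2
  by have := cardsD1 x e; rewrite xe uE // => card_e; apply/eqP; lia.
have {}exyz : e = [set x; y; z] by rewrite -setUA -exyz setD1K.
rewrite {}exyz in eE *.
by apply/imsetP; exists (x, y, z); rewrite ?inE.
Qed.

Lemma contains_Krt0 n r (E : {set {set 'I_n}}) : 0 < r -> contains_Krt r 0 E.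
Proof.
move=> r_gt0; exists (fun=> set0); split; first by move=> i; exact: cards0.
split=> [i j _ | g gV]; first by rewrite -setI_eq0 setI0.
by have := gV (Ordinal r_gt0); rewrite inE.
Qed.

Lemma imset_ord2 (T : finType) (g : 'I_2 -> T) :
  [set g i | i in 'I_2] = [set g ord0; g ord_max].
Proof.
apply/setP => z; rewrite !inE; apply/imsetP/orP => [[[[|[|k]] lt_k2] // _ ->] | ].
- by left; apply/eqP; congr g; exact: val_inj.
- by right; apply/eqP; congr g; exact: val_inj.
by case=> /eqP ->; [exists ord0 | exists ord_max].
Qed.

Lemma imset_ord3 (T : finType) (g : 'I_3 -> T) :
  [set g i | i in 'I_3] = [set g ord0; g (inord 1); g ord_max].
Proof.
apply/setP => z; rewrite !inE -orbA.
apply/imsetP/or3P => [[[[|[|[|k]]] lt_k3] // _ ->] | ].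
- by apply: Or31; apply/eqP; congr g; exact: val_inj.
- by apply: Or32; apply/eqP; congr g; apply: val_inj; rewrite /= inordK.
- by apply: Or33; apply/eqP; congr g; exact: val_inj.
by case=> /eqP ->; [exists ord0 | exists (inord 1) | exists ord_max].
Qed.

Lemma contains_K2t n t (E : {set {set 'I_n}}) (X Y : {set 'I_n}) :
  #|X| = t -> #|Y| = t -> [disjoint X & Y] ->
  (forall x y, x \in X -> y \in Y -> [set x; y] \in E) -> contains_Krt 2 t E.
Proof.
move=> cardX cardY dXY XYE; exists (fun i : 'I_2 => nth set0 [:: X; Y] i).
split; first by move=> [[|[|i]] lt_i2].
split=> [[[|[|i]] ?] [[|[|j]] ?] //= _ | g gV]; first by rewrite disjoint_sym.
by rewrite imset_ord2; apply: XYE; [exact: (gV ord0) | exact: (gV ord_max)].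
Qed.

Lemma contains_K3t n t (E : {set {set 'I_n}}) (X Y Z : {set 'I_n}) :
  #|X| = t -> #|Y| = t -> #|Z| = t ->
  [disjoint X & Y] -> [disjoint X & Z] -> [disjoint Y & Z] ->
  (forall x y z, x \in X -> y \in Y -> z \in Z -> [set x; y; z] \in E) ->
  contains_Krt 3 t E.
Proof.
move=> cardX cardY cardZ dXY dXZ dYZ XYZE.
exists (fun i : 'I_3 => nth set0 [:: X; Y; Z] i).
split; first by move=> [[|[|[|i]]] lt_i3].
split=> [[[|[|[|i]]] ?] [[|[|[|j]]] ?] //= _ | g gV]; try by rewrite disjoint_sym.
rewrite imset_ord3; apply: XYZE; [exact: (gV ord0) | | exact: (gV ord_max)].
by have := gV (inord 1); rewrite /= inordK.
Qed.

Lemma sqr_le_bin2 n : 2 <= n -> n * n <= 4 * 'C(n, 2).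
Proof.
by move=> n_ge2; have := bin_ffact n 2; rewrite (_ : 2`! = 2) // !ffactnS ffactn0; nia.
Qed.

Lemma cube_le_bin3 n : 6 <= n -> n * n * n <= 12 * 'C(n, 3).
Proof.
move=> n_ge6; have := bin_ffact n 3.
rewrite (_ : 3`! = 6) // !ffactnS ffactn0 muln1 => bin3.
have [k n_eq] : exists k, n = k + 6 by exists (n - 6); lia.
have -> : 12 * 'C(n, 3) = 2 * ((k + 6) * (k + 5) * (k + 4)) by rewrite n_eq in bin3 *; lia.
have -> : 2 * ((k + 6) * (k + 5) * (k + 4)) =
  (k + 6) * (k + 6) * (k + 6) + (k * k * k + 12 * (k * k) + 40 * k + 24) by ring.
by rewrite n_eq leq_addr.
Qed.

Lemma contains_K2t_dense n p t (E : {set {set 'I_n}}) :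
  uniform 2 E -> 0 < p -> 'C(n, 2) <= p * #|E| ->
  t.+1 * (16 * p) ^ t.+1 <= n -> contains_Krt 2 t E.
Proof.
move=> uE p_gt0 dense large.
pose R : rel 'I_n := fun x y => [set x; y] \in E.
have irrR : irreflexive R by move=> x; apply/negbTE/negP => /uE; rewrite setUid cards1.
have n_ge2 : 2 <= n.
  apply: leq_trans large; rewrite expnS mulnA -[2]muln1.
  by apply: leq_mul; [nia | rewrite expn_gt0 muln_gt0 p_gt0].
have [X [Y [cardX cardY dXY XY]]] : exists X Y : {set 'I_n}, [/\ #|X| = t, #|Y| = t,
    [disjoint X & Y] & forall x y, x \in X -> y \in Y -> R x y].
  apply: (@exists_Ktt_dense _ R (4 * p)); rewrite ?muln_gt0 ?card_ord ?mulnA //.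
  have : 'C(n, 2) <= p * \sum_x #|[set y | R x y]|.
    exact: leq_trans dense (leq_mul (leqnn p) (card_le_sum_link2 uE)).
  have := sqr_le_bin2 n_ge2; lia.
exact: contains_K2t cardX cardY dXY XY.
Qed.

Lemma card3_neq (T : finType) (x y z : T) :
  #|[set x; y; z]| = 3 -> [/\ x != y, x != z & y != z].
Proof.
rewrite -setUA cardsU1 cards2 !inE negb_or.
by case: (x =P y); case: (x =P z); case: (y =P z).
Qed.

Lemma predn_divn_mul_lt a d : 0 < a -> (a %/ d).-1 * d < a.
Proof.
move=> a_gt0; have := leq_divM a d.
by case: (a %/ d) => [|q] //=; rewrite mulSn; case: d => [|d]; lia.
Qed.

Lemma exists_common_link n p t (E : {set {set 'I_n}}) :
  uniform 3 E -> 0 < p -> 'C(n, 3) <= p * #|E| ->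
  t.+1 * (48 * p) <= n -> (48 * p) ^ t.+1 <= n ->
  exists2 Z : {set 'I_n}, #|Z| = t &
    exists2 A : {set 'I_n * 'I_n}, n * n <= (48 * p) ^ t.+1 * #|A| &
      forall x y z, (x, y) \in A -> z \in Z -> [set x; y; z] \in E.
Proof.
move=> uE p_gt0 dense large B_le.
pose N (q : 'I_n * 'I_n) := [set z | [set q.1; q.2; z] \in E].
set c := 12 * p; set M := 2 * c * (4 * c) ^ t.
have c_gt0 : 0 < c by rewrite /c; lia.
have two_M : 2 * M = (48 * p) ^ t.+1.
  by rewrite (_ : 48 * p = 4 * c) /M ?expnS; [ring | rewrite /c; lia].
have M_gt0 : 0 < M.
  have : 0 < (48 * p) ^ t.+1 by rewrite expn_gt0 muln_gt0 p_gt0.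
  lia.
have M_le : M <= n * n by apply: leq_trans (leq_pmulr n _); lia.
have dense1 : #|{: 'I_n * 'I_n}| * #|'I_n| <= c * \sum_q #|N q|.
  rewrite card_prod card_ord.
  have : 'C(n, 3) <= p * \sum_q #|N q|.
    exact: leq_trans dense (leq_mul (leqnn p) (card_le_sum_link3 uE)).
  have := @cube_le_bin3 n; lia.
set m := n * n %/ M.
have [Z cardZ [A cardA AZ]] : exists2 Z : {set 'I_n}, #|Z| = t &
    exists2 A : {set 'I_n * 'I_n}, #|A| = m & {in A, forall q, Z \subset N q}.
  apply: exists_subset_covered_dense c_gt0 dense1 _ _; first by rewrite card_ord /c; lia.
  by rewrite card_prod card_ord; apply: predn_divn_mul_lt; lia.
exists Z => //; exists A => [| x y z xyA zZ]; last first.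
  by have := subsetP (AZ _ xyA) z zZ; rewrite inE.
have m_gt0 : 0 < m by rewrite divn_gt0.
apply: leq_trans (ltnW (ltn_ceil _ M_gt0)) _.
by rewrite -/m cardA -two_M (mulnC 2 M) -mulnA mulnC leq_mul2l; apply/orP; right; lia.
Qed.

Lemma contains_K3t_dense n p t (E : {set {set 'I_n}}) :
  uniform 3 E -> 0 < p -> 'C(n, 3) <= p * #|E| ->
  t.+1 * (4 * (48 * p) ^ t.+1) ^ t.+1 <= n -> contains_Krt 3 t E.
Proof.
move=> uE p_gt0 dense large.
have [-> | t_gt0] := posnP t; first exact: contains_Krt0.
set B := (48 * p) ^ t.+1.
have B_gt0 : 0 < B by rewrite expn_gt0 muln_gt0 p_gt0.
have B_le : 4 * B <= n.
  apply: leq_trans large; apply: leq_trans (leq_pmull _ (ltn0Sn t)).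
  by rewrite expnS leq_pmulr // expn_gt0 muln_gt0 B_gt0.
have large1 : t.+1 * (48 * p) <= n.
  apply: leq_trans B_le; apply: leq_trans (leq_pmull _ (isT : 0 < 4)).
  by rewrite /B expnS mulnC leq_mul2l ltn_expl ?orbT //; lia.
have [Z cardZ [A dense2 AZE]] :=
  exists_common_link uE p_gt0 dense large1 (leq_trans (leq_pmull _ (isT : 0 < 4)) B_le).
pose R : rel 'I_n := fun x y => (x, y) \in A.
have [z0 z0Z] : exists z0, z0 \in Z by apply/card_gt0P; rewrite cardZ.
have irrR : irreflexive R.
  by move=> x; apply/negbTE/negP => /AZE/(_ z0Z)/uE/card3_neq [/eqP].
have [X [Y [cardX cardY dXY XY]]] : exists X Y : {set 'I_n}, [/\ #|X| = t, #|Y| = t,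
    [disjoint X & Y] & forall x y, x \in X -> y \in Y -> R x y].
  apply: (exists_Ktt_dense irrR B_gt0); rewrite card_ord //.
  rewrite (sum_card_pairs (fun x => [set y | R x y])) (eq_card (B := A)) //.
  by move=> -[x y]; rewrite !inE.
have [x0 x0X] : exists x0, x0 \in X by apply/card_gt0P; rewrite cardX.
have [y0 y0Y] : exists y0, y0 \in Y by apply/card_gt0P; rewrite cardY.
have dXZ : [disjoint X & Z].
  apply/pred0P => x /=; apply/negP => /andP [xX xZ].
  by have /uE/card3_neq [_ /eqP] := AZE x y0 x (XY x y0 xX y0Y) xZ.
have dYZ : [disjoint Y & Z].
  apply/pred0P => y /=; apply/negP => /andP [yY yZ].
  by have /uE/card3_neq [_ _ /eqP] := AZE x0 y y (XY x0 y x0X yY) yZ.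
apply: (contains_K3t cardX cardY cardZ dXY dXZ dYZ) => x y z xX yY zZ.
exact: AZE (XY x y xX yY) zZ.
Qed.

(** * Choice of the constants *)

Section Asymptotics.
Local Open Scope R_scope.

Lemma ln_lt_2sqrt z : 0 < z -> ln z < 2 * sqrt z.
Proof.
move=> z_gt0; have sz_gt0 : 0 < sqrt z by apply: sqrt_lt_R0.
have -> : ln z = 2 * ln (sqrt z).
  by rewrite -{1}(sqrt_sqrt z (Rlt_le _ _ z_gt0)) ln_mult //; lra.
have := exp_ineq1_le (ln (sqrt z)); rewrite exp_ln //; lra.
Qed.

Lemma ln_le x y : 0 < x -> x <= y -> ln x <= ln y.
Proof.
move=> x_gt0 /Rle_lt_or_eq_dec [/(ln_increasing _ _ x_gt0) /Rlt_le // | ->].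
exact: Rle_refl.
Qed.

Lemma ln_le_inv x y : 0 < x -> 0 < y -> ln x <= ln y -> x <= y.
Proof.
move=> x_gt0 y_gt0 le_ln; case: (Rle_or_lt x y) => // /(ln_increasing _ _ y_gt0).
lra.
Qed.

Lemma exists_nat_between x : 0 <= x -> exists k : nat, x <= INR k <= x + 1.
Proof.
move=> x_ge0; have [up_gt up_le] := archimed x.
have up_ge0 : Z.le 0 (up x) by apply: le_IZR; lra.
by exists (Z.to_nat (up x)); rewrite INR_IZR_INZ Z2Nat.id //; lra.
Qed.

Lemma INR_muln m n : INR (m * n) = INR m * INR n.
Proof. by rewrite mulnE mult_INR. Qed.

Lemma INR_expn m k : INR (m ^ k) = INR m ^ k.
Proof. by elim: k => [|k IH] //; rewrite expnS INR_muln IH. Qed.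

Lemma eventually_mul_pow_le (b : nat) (beta C : R) :
  (1 < b)%N -> 0 <= beta -> beta * ln (INR b) <= 1 / 2 -> 0 <= C ->
  exists n0 : nat, forall n : nat, (n0 <= n)%N -> forall k t : nat,
    INR k <= beta * ln (INR n) + C -> INR t <= ln (INR n) -> (t.+1 * b ^ k <= n)%N.
Proof.
move=> b_gt1 beta_ge0 beta_b C_ge0.
have b_gt1R : 1 < INR b by apply: (lt_INR 1); apply/ltP.
have lnb_gt0 : 0 < ln (INR b) by rewrite -ln_1; apply: ln_increasing; lra.
set K := C * ln (INR b).
have K_ge0 : 0 <= K by rewrite /K; nra.
have [n0 [n0_ge _]] := exists_nat_between (Rlt_le _ _ (exp_pos ((2 * K + 5) ^ 2))).
exists n0 => n le_n0n k t le_k le_t.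
have n_ge : exp ((2 * K + 5) ^ 2) <= INR n by apply: Rle_trans n0_ge (le_INR _ _ (leP le_n0n)).
have n_gt0 : 0 < INR n by have := exp_pos ((2 * K + 5) ^ 2); lra.
set y := ln (INR n) in le_k le_t *.
have y_ge : (2 * K + 5) ^ 2 <= y.
  by rewrite /y -(ln_exp ((2 * K + 5) ^ 2)); apply: ln_le => //; apply: exp_pos.
(* With [u = sqrt (ln n + 1) >= 2 K + 5]:
   [ln (t + 1) + k ln b <= 2 u + ln n / 2 + K <= ln n]. *)
set u := sqrt (y + 1).
have uu : u * u = y + 1 by apply: sqrt_sqrt; nra.
have u_ge : 2 * K + 5 <= u.
  by apply: Rsqr_incr_0_var; [rewrite /Rsqr uu; nra | apply: sqrt_pos].
have ln_t : ln (INR t.+1) < 2 * u.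
  apply: (Rle_lt_trans _ _ _ _ (@ln_lt_2sqrt (y + 1) _)); last by nra.
  by apply: ln_le; [apply: lt_0_INR; lia | rewrite S_INR; lra].
have k_lnb : INR k * ln (INR b) <= y / 2 + K.
  have : INR k * ln (INR b) <= (beta * y + C) * ln (INR b) by apply: Rmult_le_compat_r; lra.
  rewrite /K; nra.
have b_pow_gt0 : 0 < INR b ^ k by apply: pow_lt; lra.
apply/leP/INR_le; rewrite INR_muln INR_expn.
apply: ln_le_inv => //; first by apply: Rmult_lt_0_compat => //; apply: lt_0_INR; lia.
rewrite ln_mult ?ln_pow -/y; [nra | lra | apply: lt_0_INR; lia | by []].
Qed.

Lemma log2_gt0 n : (1 < n)%N -> 0 < log2 (INR n).
Proof.
move=> n_gt1; apply: Rdiv_lt_0_compat; rewrite -ln_1; apply: ln_increasing; try lra.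
by apply: (lt_INR 1); apply/ltP.
Qed.

Lemma Rpower_log2_2 n : (1 < n)%N ->
  Rpower (log2 (INR n)) (1 / INR (2 - 1)) = log2 (INR n).
Proof. by move=> n_gt1; rewrite /= Rdiv_1_r Rpower_1 //; apply: log2_gt0. Qed.

Lemma Rpower_log2_3 n : (1 < n)%N ->
  Rpower (log2 (INR n)) (1 / INR (3 - 1)) = sqrt (log2 (INR n)).
Proof.
move=> n_gt1; rewrite -Rpower_sqrt; last exact: log2_gt0.
by congr Rpower; rewrite /=; lra.
Qed.

Definition eta_bound : R := / 25000.

Lemma eta_bound_gt0 : 0 < eta_bound.
Proof. by rewrite /eta_bound; lra. Qed.

Section Threshold.
Variables (eta : R) (p : nat).
Hypotheses (eta_gt0 : 0 < eta) (eta_small : eta < / 25000).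
Hypotheses (p_ge : / eta <= INR p) (p_le : INR p <= / eta + 1).

Let eta_p_ge1 : 1 <= eta * INR p.
Proof. by rewrite -(Rinv_r eta); [apply: Rmult_le_compat_l; lra | lra]. Qed.

Lemma threshold_p_gt0 : (0 < p)%N.
Proof. by apply/ltP/INR_lt; rewrite /=; nra. Qed.

Lemma threshold_density n r (E : {set {set 'I_n}}) :
  INR #|E| >= eta * INR 'C(n, r) -> ('C(n, r) <= p * #|E|)%N.
Proof.
move=> dense; apply/leP/INR_le; rewrite INR_muln.
have := pos_INR 'C(n, r); have := pos_INR #|E|; nra.
Qed.

(* [ln z < 2 sqrt z] and [48 p <= 96 / eta] give [eta ln (48 p) < 2 sqrt (96 eta)],
   which is at most [1/8] as soon as [eta <= 1/24576]. *)
Lemma threshold_eta_ln : eta * ln (INR (48 * p)) <= 1 / 8.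
Proof.
have inv_gt : 25000 < / eta.
  by rewrite -(Rinv_inv 25000); apply: Rinv_lt_contravar; nra.
have le_b : INR (48 * p) <= 96 * / eta by rewrite INR_muln /=; lra.
have b_gt0 : 0 < INR (48 * p) by rewrite INR_muln /=; lra.
apply: Rle_trans (_ : eta * ln (96 * / eta) <= _).
  by apply: Rmult_le_compat_l; [lra | apply: ln_le].
have x_gt0 : 0 < 96 * / eta by lra.
have := ln_lt_2sqrt x_gt0; set s := sqrt _ => ln_s.
have ss : s * s = 96 * / eta by apply: sqrt_sqrt; lra.
have s_ge0 : 0 <= s by apply: sqrt_pos.
have eta_ss : eta * (s * s) = 96 by rewrite ss -Rmult_assoc (Rmult_comm eta) Rmult_assoc Rinv_r; lra.
have : 16 * eta * s <= 1 by nra.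
nra.
Qed.

Let inv_ln2 : 0 < / ln 2 < 2.
Proof.
have ln2_gt := ln_lt_2; split; first by apply: Rinv_0_lt_compat; lra.
have := Rinv_lt_contravar (/ 2) (ln 2) ltac:(nra) ln2_gt; rewrite Rinv_inv; lra.
Qed.

Let b_gt1 : (1 < 48 * p)%N.
Proof. by have := threshold_p_gt0; lia. Qed.

Let ln_b_ge0 : 0 <= ln (INR (48 * p)).
Proof. by rewrite -ln_1; apply: ln_le; [lra | apply: (le_INR 1); apply/leP; lia]. Qed.

Let ln_ge0 n : (0 < n)%N -> 0 <= ln (INR n).
Proof. by move=> n_gt0; rewrite -ln_1; apply: ln_le; [lra | apply: (le_INR 1); apply/leP]. Qed.

Lemma threshold_K2 : exists n0 : nat, forall n : nat, (n0 < n)%N -> forall t : nat,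
  INR t <= eta * log2 (INR n) -> (t.+1 * (16 * p) ^ t.+1 <= n)%N.
Proof.
set beta := eta * / ln 2.
have beta_ge0 : 0 <= beta by rewrite /beta; nra.
have beta_le1 : beta <= 1 by rewrite /beta; nra.
have beta_b : beta * ln (INR (48 * p)) <= 1 / 2.
  by have := threshold_eta_ln; rewrite /beta; nra.
have [n0 large] := eventually_mul_pow_le b_gt1 beta_ge0 beta_b Rle_0_1.
exists n0 => n lt_n t le_t.
have ln_n := ln_ge0 (leq_ltn_trans (leq0n n0) lt_n).
have t_le : INR t <= beta * ln (INR n) by move: le_t; rewrite /log2 /Rdiv /beta; lra.
apply: leq_trans _ (large n (ltnW lt_n) t.+1 t _ _); last 2 first.
- by rewrite S_INR; lra.
- by nra.
by rewrite leq_mul2l leq_exp2rW ?orbT //; lia.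
Qed.

Lemma threshold_K3 : exists n0 : nat, forall n : nat, (n0 < n)%N -> forall t : nat,
  INR t <= eta * sqrt (log2 (INR n)) ->
  (t.+1 * (4 * (48 * p) ^ t.+1) ^ t.+1 <= n)%N.
Proof.
set beta := 2 * (eta * eta * / ln 2).
have beta_ge0 : 0 <= beta by rewrite /beta; nra.
have beta_le2 : beta <= 2 by rewrite /beta; nra.
have beta_b : beta * ln (INR (48 * p)) <= 1 / 2.
  have eta_ln2 : eta * / ln 2 <= 1 by nra.
  have eta_ln_ge0 : 0 <= eta * ln (INR (48 * p)) by nra.
  by have := threshold_eta_ln; rewrite /beta; nra.
have [n0 large] : exists n0 : nat, forall n : nat, (n0 <= n)%N -> forall k t : nat,
    INR k <= beta * ln (INR n) + 5 -> INR t <= ln (INR n) -> (t.+1 * (48 * p) ^ k <= n)%N.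
  by apply: eventually_mul_pow_le => //; lra.
exists n0 => n lt_n t le_t.
have ln_n := ln_ge0 (leq_ltn_trans (leq0n n0) lt_n).
have L_ge0 : 0 <= log2 (INR n) by rewrite /log2 /Rdiv; nra.
have sL := sqrt_sqrt _ L_ge0; have sL_ge0 := sqrt_pos (log2 (INR n)).
have t_ge0 := pos_INR t.
have t_sqr : INR t * INR t <= beta / 2 * ln (INR n).
  have : INR t * INR t <= (eta * sqrt (log2 (INR n))) * (eta * sqrt (log2 (INR n))) by nra.
  by move: sL; rewrite /log2 /Rdiv /beta; nra.
have t_le_sqr : INR t <= INR t * INR t.
  by rewrite -INR_muln; apply/le_INR/leP; nia.
apply: leq_trans _ (large n (ltnW lt_n) (t.+1 * t.+2)%N t _ _); last 2 first.
- by rewrite INR_muln !S_INR; nra.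
- by nra.
rewrite leq_mul2l (mulnC t.+1) expnM; apply/orP; right; apply: leq_exp2rW.
by rewrite [X in (_ <= X)%N]expnS leq_mul2r; apply/orP; right; lia.
Qed.

End Threshold.
End Asymptotics.

Theorem corollary1 :
  forall r : nat, (r = 2 \/ r = 3) ->
  exists eta0 : R, Rlt 0 eta0 /\
  forall eta : R, Rlt 0 eta -> Rlt eta eta0 ->
  exists n0 : nat, forall n : nat, n0 < n ->
  forall E : {set {set 'I_n}}, @uniform n r E ->
  Rge (INR #|E|) (Rmult eta (INR 'C(n, r))) ->
  forall t : nat,
  Rle (INR t) (Rmult eta (Rpower (log2 (INR n)) (Rdiv 1 (INR (r - 1))))) ->
  @contains_Krt n r t E.
Proof.
move=> r r23; exists eta_bound; split; first exact: eta_bound_gt0.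
move=> eta eta_gt0 eta_small.
have [p [p_ge p_le]] := exists_nat_between (Rlt_le _ _ (Rinv_0_lt_compat _ eta_gt0)).
have p_gt0 := threshold_p_gt0 eta_gt0 eta_small p_ge.
case: r23 => ->.
- have [n0 large] := threshold_K2 eta_gt0 eta_small p_ge p_le.
  exists n0.+1 => n lt_n E uE /(threshold_density eta_gt0 p_ge) denseE t.
  rewrite Rpower_log2_2; last exact: leq_ltn_trans lt_n.
  by move/(large n (ltnW lt_n)); apply: contains_K2t_dense.
- have [n0 large] := threshold_K3 eta_gt0 eta_small p_ge p_le.
  exists n0.+1 => n lt_n E uE /(threshold_density eta_gt0 p_ge) denseE t.
  rewrite Rpower_log2_3; last exact: leq_ltn_trans lt_n.
  by move/(large n (ltnW lt_n)); apply: contains_K3t_dense.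
Qed.
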